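(* Let $\mathcal R$ be the set of natural numbers $N$ satisfying Robin's inequality $\sigma(N)<e^\gamma N\log(\log N)$. Then $\mathcal R$ has natural density $1$, i.e. $\lim_{s\to\infty}\#(\mathcal R\cap\{1,\dots,s\})/s=1$.
   Context: $\sigma(N)=\sum_{d\mid N}d$ is the sum-of-divisors function and $\gamma$ is the Euler–Mascheroni constant. (For $N\le 2$, $\log\log N$ is undefined or negative and such $N$ are not in $\mathcal R$; this does not affect the density.) *)

From Stdlib Require Import Reals Lra Lia List Bool.
From Coquelicot Require Import Coquelicot.
Open Scope R_scope.

Definition sigma (N : nat) : R :=
  fold_right Rplus 0
    (map INR (filter (fun d => Nat.eqb (N mod d) 0) (seq 1 N))).

Definition harmonic (n : nat) : R :=
  fold_right Rplus 0 (map (fun k => / INR k) (seq 1 n)).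

Definition euler_gamma : R := real (Lim_seq (fun n => harmonic n - ln (INR n))).

(* Robin's inequality sigma(N) < e^gamma N log log N, as a boolean test.
   N <= 2 is excluded (log log N undefined/negative), as in the paper. *)
Definition robin (N : nat) : bool :=
  Nat.leb 3 N &&
  (if Rlt_dec (sigma N) (exp euler_gamma * INR N * ln (ln (INR N)))
   then true else false).

Definition robin_count (s : nat) : nat :=
  length (filter robin (seq 1 s)).

From Pilot Require Import Defs.
From Stdlib Require Import Reals Lra Lia List Bool.
From Coquelicot Require Import Coquelicot.
Open Scope R_scope.

(* Swapping the order of summation gives sum_{N <= s} sigma(N) <= s^2, so by
   Markov's inequality at most s K / c integers N in (s/K, s] have
   sigma(N) >= c s / K.  An N > M failing Robin's inequality has
   sigma(N) >= e^gamma N log log N >= c N with c = e^gamma log log M.  Hence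
   the exceptions up to s number at most M + s/K + s K / c; letting s, then
   M, then K grow makes this an arbitrarily small proportion of s. *)

Definition sumR (f : nat -> R) (l : list nat) : R := fold_right Rplus 0 (map f l).

Lemma sumR_nil f : sumR f nil = 0.
Proof. reflexivity. Qed.

Lemma sumR_cons f x l : sumR f (x :: l) = f x + sumR f l.
Proof. reflexivity. Qed.

Lemma sumR_app f l1 l2 : sumR f (l1 ++ l2) = sumR f l1 + sumR f l2.
Proof. unfold sumR; induction l1 as [|x l IH]; simpl; [ring|]. rewrite IH; ring. Qed.

Lemma sumR_plus f g l : sumR (fun x => f x + g x) l = sumR f l + sumR g l.
Proof. unfold sumR; induction l as [|x l IH]; simpl; [ring|]. rewrite IH; ring. Qed.

Lemma sumR_const a l : sumR (fun _ => a) l = INR (length l) * a.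
Proof.
  unfold sumR; induction l as [|x l IH]; simpl length; [simpl; ring|].
  rewrite S_INR; simpl. rewrite IH; ring.
Qed.

Lemma sumR_ext f g l : (forall x, f x = g x) -> sumR f l = sumR g l.
Proof. intros Hfg; unfold sumR; f_equal; apply map_ext, Hfg. Qed.

Lemma sumR_le f g l : (forall x, In x l -> f x <= g x) -> sumR f l <= sumR g l.
Proof.
  induction l as [|x l IH]; intros Hfg; rewrite ?sumR_nil, ?sumR_cons; [lra|].
  apply Rplus_le_compat; [apply Hfg; left; auto|].
  apply IH; intros y Hy; apply Hfg; right; auto.
Qed.

Lemma sumR_nonneg f l : (forall x, In x l -> 0 <= f x) -> 0 <= sumR f l.
Proof.
  intros Hf. rewrite <- (Rmult_0_r (INR (length l))), <- sumR_const.
  apply sumR_le, Hf.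
Qed.

Lemma sumR_comm (F : nat -> nat -> R) l1 l2 :
  sumR (fun x => sumR (F x) l2) l1 = sumR (fun y => sumR (fun x => F x y) l1) l2.
Proof.
  induction l1 as [|x l IH]; rewrite ?sumR_nil, ?sumR_cons.
  - rewrite (sumR_ext _ (fun _ => 0)) by reflexivity. rewrite sumR_const; ring.
  - rewrite IH, <- sumR_plus. reflexivity.
Qed.

Lemma count_mul_le_sumR (p : nat -> bool) f T l :
  (forall x, In x l -> 0 <= f x) -> (forall x, In x l -> p x = true -> T <= f x) ->
  INR (length (filter p l)) * T <= sumR f l.
Proof.
  induction l as [|x l IH]; intros Hf HT; simpl filter; rewrite ?sumR_nil, ?sumR_cons;
    [simpl; lra|].
  assert (IHl : INR (length (filter p l)) * T <= sumR f l).
  { apply IH; intros y Hy; [apply Hf | apply HT]; right; auto. }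
  assert (0 <= f x) by (apply Hf; left; auto).
  destruct (p x) eqn:Hp; simpl length.
  - assert (T <= f x) by (apply HT; auto; left; auto). rewrite S_INR. lra.
  - lra.
Qed.

Lemma count_le_split (p q : nat -> bool) l :
  (length (filter p l) <= length (filter q l)
                         + length (filter (fun x => p x && negb (q x)) l))%nat.
Proof. induction l as [|x l IH]; simpl; auto. destruct (p x), (q x); simpl; lia. Qed.

Lemma count_seq_le_bound (p : nat -> bool) s M :
  (forall x, p x = true -> (x <= M)%nat) -> (length (filter p (seq 1 s)) <= M)%nat.
Proof.
  intros HM. rewrite <- (length_seq M 1).
  apply NoDup_incl_length; [apply NoDup_filter, seq_NoDup|].
  intros x Hx. apply filter_In in Hx as [Hx Hp]. apply in_seq in Hx.
  apply in_seq. specialize (HM x Hp). lia.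
Qed.

Definition dvd_weight (N d : nat) : R := if Nat.eqb (N mod d) 0 then INR d else 0.

Lemma dvd_weight_nonneg N d : 0 <= dvd_weight N d.
Proof. unfold dvd_weight; destruct (Nat.eqb _ _); [apply pos_INR | lra]. Qed.

(* [Defs.sigma] is qualified throughout: [Reals] exports an unrelated [sigma]. *)
Lemma sigma_sumR N : Defs.sigma N = sumR (dvd_weight N) (seq 1 N).
Proof.
  unfold Defs.sigma, sumR, dvd_weight. induction (seq 1 N) as [|d l IH]; simpl; auto.
  destruct (Nat.eqb (N mod d) 0); simpl; rewrite IH; ring.
Qed.

Lemma sigma_nonneg N : 0 <= Defs.sigma N.
Proof. rewrite sigma_sumR. apply sumR_nonneg; intros; apply dvd_weight_nonneg. Qed.

Lemma mul_div_succ d s : (0 < d)%nat ->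
  (d * (S s / d) = d * (s / d) + (if Nat.eqb (S s mod d) 0 then d else 0))%nat.
Proof.
  intros Hd. pose proof (Nat.div_mod s d ltac:(lia)) as Hs.
  pose proof (Nat.mod_upper_bound s d ltac:(lia)) as Hr.
  set (q := (s / d)%nat) in *; set (r := (s mod d)%nat) in *.
  destruct (Nat.eq_dec (r + 1) d) as [Hwrap | Hwrap].
  - rewrite <- (Nat.div_unique (S s) d (q + 1) 0), <- (Nat.mod_unique (S s) d (q + 1) 0)
      by lia. simpl; lia.
  - rewrite <- (Nat.div_unique (S s) d q (r + 1)), <- (Nat.mod_unique (S s) d q (r + 1))
      by lia. destruct (Nat.eqb_spec (r + 1) 0); lia.
Qed.

Lemma sumR_dvd_weight_seq d s : (0 < d)%nat ->
  sumR (fun N => dvd_weight N d) (seq 1 s) = INR (d * (s / d)).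
Proof.
  intros Hd. induction s as [|s IH].
  - rewrite Nat.Div0.div_0_l, Nat.mul_0_r; reflexivity.
  - rewrite seq_S, sumR_app, IH, mul_div_succ by exact Hd.
    replace (1 + s)%nat with (S s) by lia.
    rewrite sumR_cons, sumR_nil, plus_INR. unfold dvd_weight.
    destruct (Nat.eqb (S s mod d) 0); simpl; ring.
Qed.

Lemma sumR_sigma_le s : sumR Defs.sigma (seq 1 s) <= INR s * INR s.
Proof.
  apply Rle_trans with (sumR (fun N => sumR (dvd_weight N) (seq 1 s)) (seq 1 s)).
  - apply sumR_le. intros N HN. apply in_seq in HN. rewrite sigma_sumR.
    replace (seq 1 s) with (seq 1 N ++ seq (1 + N) (s - N))
      by (rewrite <- seq_app; f_equal; lia).
    rewrite sumR_app.
    assert (0 <= sumR (dvd_weight N) (seq (1 + N) (s - N)))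
      by (apply sumR_nonneg; intros; apply dvd_weight_nonneg).
    lra.
  - rewrite sumR_comm. apply Rle_trans with (sumR (fun _ => INR s) (seq 1 s)).
    + apply sumR_le. intros d Hd. apply in_seq in Hd.
      rewrite sumR_dvd_weight_seq by lia. apply le_INR, Nat.Div0.mul_div_le.
    + rewrite sumR_const, length_seq. lra.
Qed.

Lemma count_sigma_ge_le (p : nat -> bool) s T :
  (forall N, p N = true -> T <= Defs.sigma N) ->
  INR (length (filter p (seq 1 s))) * T <= INR s * INR s.
Proof.
  intros HT. eapply Rle_trans; [|apply sumR_sigma_le].
  apply count_mul_le_sumR; intros; [apply sigma_nonneg | apply HT; auto].
Qed.

Lemma gt_1_of_ln_pos x : 0 < ln x -> 1 < x.
Proof.
  intros Hln. destruct (Rle_lt_dec x 1) as [Hx | Hx]; [exfalso | exact Hx].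
  destruct (Rle_lt_dec x 0) as [Hx0 | Hx0].
  - unfold ln in Hln. destruct (Rlt_dec 0 x); lra.
  - destruct (Req_dec x 1) as [-> | Hne]; [rewrite ln_1 in Hln; lra|].
    assert (ln x < ln 1) by (apply ln_increasing; lra). rewrite ln_1 in *; lra.
Qed.

Lemma ln_ln_le x y : 1 < x -> x <= y -> ln (ln x) <= ln (ln y).
Proof.
  intros Hx Hxy. destruct (Req_dec x y) as [<- | Hne]; [lra|].
  assert (Hlnx : 0 < ln x) by (rewrite <- ln_1; apply ln_increasing; lra).
  apply Rlt_le, ln_increasing; [exact Hlnx | apply ln_increasing; lra].
Qed.

Lemma sigma_ge_of_not_robin N : (3 <= N)%nat -> robin N = false ->
  exp euler_gamma * INR N * ln (ln (INR N)) <= Defs.sigma N.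
Proof.
  intros HN Hr. unfold robin in Hr.
  replace (Nat.leb 3 N) with true in Hr by (symmetry; apply Nat.leb_le; exact HN).
  destruct (Rlt_dec _ _) as [_ | Hge]; [discriminate | lra].
Qed.

Lemma robin_count_le s : (robin_count s <= s)%nat.
Proof. unfold robin_count. rewrite <- (length_seq s 1) at 2. apply filter_length_le. Qed.

Lemma non_robin_count s :
  INR s - INR (robin_count s) = INR (length (filter (fun N => negb (robin N)) (seq 1 s))).
Proof.
  unfold robin_count. rewrite <- (length_seq s 1) at 1.
  rewrite <- (filter_length robin), plus_INR. ring.
Qed.

Lemma count_mul_le_div (K s : nat) : (0 < K)%nat ->
  INR (length (filter (fun N => Nat.leb (K * N) s) (seq 1 s))) <= INR s / INR K.
Proof.
  intros HK. assert (HK' : 0 < INR K) by (apply lt_0_INR; exact HK).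
  assert (Hdiv : (K * length (filter (fun N => Nat.leb (K * N) s) (seq 1 s)) <= s)%nat).
  { apply Nat.le_trans with (K * (s / K))%nat; [|apply Nat.Div0.mul_div_le].
    apply Nat.mul_le_mono_l, count_seq_le_bound. intros N HN.
    apply Nat.div_le_lower_bound; [lia | apply Nat.leb_le, HN]. }
  apply le_INR in Hdiv. rewrite mult_INR in Hdiv.
  apply Rle_div_r; [exact HK' | lra].
Qed.

Lemma count_large_non_robin_le (K M s : nat) : (0 < K)%nat -> 0 < ln (ln (INR M)) ->
  INR (length (filter (fun N => negb (robin N) && negb (Nat.leb N M) && negb (Nat.leb (K * N) s))
                 (seq 1 s)))
    <= INR s * INR K / (exp euler_gamma * ln (ln (INR M))).
Proof.
  intros HK Hlnln. set (c := exp euler_gamma * ln (ln (INR M))).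
  assert (HK' : 0 < INR K) by (apply lt_0_INR; exact HK).
  assert (Hc : 0 < c) by (apply Rmult_lt_0_compat; [apply exp_pos | exact Hlnln]).
  assert (HM : 2 < INR M).
  { apply gt_1_of_ln_pos in Hlnln as HlnM.
    assert (HM1 : 1 < INR M) by (apply gt_1_of_ln_pos; lra).
    rewrite <- (exp_ln (INR M)) by lra.
    pose proof (exp_ineq1 (ln (INR M))). lra. }
  destruct s as [|s']; [simpl; unfold Rdiv; rewrite !Rmult_0_l; lra|].
  assert (Hs : 0 < INR (S s')) by (apply lt_0_INR; lia).
  apply Rmult_le_reg_r with (c * INR (S s') / INR K).
  { apply Rdiv_lt_0_compat; [apply Rmult_lt_0_compat|]; assumption. }
  replace (INR (S s') * INR K / c * (c * INR (S s') / INR K))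
    with (INR (S s') * INR (S s')) by (field; lra).
  apply count_sigma_ge_le. intros N HN.
  apply andb_prop in HN as [HN Hlow]. apply andb_prop in HN as [Hrob Hsmall].
  apply negb_true_iff in Hrob, Hsmall, Hlow. apply Nat.leb_gt in Hsmall, Hlow.
  assert (HMN : INR M < INR N) by (apply lt_INR; exact Hsmall).
  assert (HsN : INR (S s') < INR K * INR N) by (rewrite <- mult_INR; apply lt_INR; exact Hlow).
  assert (HcN : c <= exp euler_gamma * ln (ln (INR N))).
  { apply Rmult_le_compat_l; [apply Rlt_le, exp_pos | apply ln_ln_le; lra]. }
  assert (H3N : (2 < N)%nat) by (apply INR_lt; simpl; lra).
  eapply Rle_trans; [|apply sigma_ge_of_not_robin; assumption].
  apply Rle_trans with (c * INR N).
  - apply Rle_div_l; [exact HK' | nra].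
  - replace (exp euler_gamma * INR N * ln (ln (INR N)))
      with ((exp euler_gamma * ln (ln (INR N))) * INR N) by ring.
    apply Rmult_le_compat_r; [lra | exact HcN].
Qed.

Lemma non_robin_count_le (K M s : nat) : (0 < K)%nat -> 0 < ln (ln (INR M)) ->
  INR s - INR (robin_count s)
    <= INR M + INR s / INR K + INR s * INR K / (exp euler_gamma * ln (ln (INR M))).
Proof.
  intros HK Hlnln. rewrite non_robin_count.
  pose proof (count_le_split (fun N => negb (robin N)) (fun N => Nat.leb N M) (seq 1 s))
    as Hsplit1.
  pose proof (count_le_split (fun N => negb (robin N) && negb (Nat.leb N M))
                (fun N => Nat.leb (K * N) s) (seq 1 s)) as Hsplit2.
  cbv beta in Hsplit1, Hsplit2. apply le_INR in Hsplit1, Hsplit2.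
  rewrite plus_INR in Hsplit1, Hsplit2.
  assert (Hsmall : INR (length (filter (fun N => Nat.leb N M) (seq 1 s))) <= INR M).
  { apply le_INR, count_seq_le_bound. intros N HN; apply Nat.leb_le, HN. }
  pose proof (count_mul_le_div K s HK). pose proof (count_large_non_robin_le K M s HK Hlnln).
  lra.
Qed.

Lemma exists_nat_ln_ln_gt A : exists M : nat, A < ln (ln (INR M)).
Proof.
  destruct (INR_archimed 1 (exp (exp A)) Rlt_0_1) as [M HM].
  rewrite Rmult_1_r in HM. exists M.
  assert (HlnM : exp A < ln (INR M)).
  { rewrite <- (ln_exp (exp A)). apply ln_increasing; [apply exp_pos | exact HM]. }
  rewrite <- (ln_exp A). apply ln_increasing; [apply exp_pos | exact HlnM].
Qed.

Lemma robin_density_defect_le (K M s : nat) :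
  (0 < K)%nat -> 0 < ln (ln (INR M)) -> (0 < s)%nat ->
  1 - INR (robin_count s) / INR s
    <= INR M / INR s + / INR K + INR K / (exp euler_gamma * ln (ln (INR M))).
Proof.
  intros HK Hlnln Hs. pose proof (non_robin_count_le K M s HK Hlnln) as Hcount.
  set (c := exp euler_gamma * ln (ln (INR M))) in *.
  assert (HK' : 0 < INR K) by (apply lt_0_INR; exact HK).
  assert (Hs' : 0 < INR s) by (apply lt_0_INR; exact Hs).
  assert (Hc : 0 < c) by (apply Rmult_lt_0_compat; [apply exp_pos | exact Hlnln]).
  replace (1 - INR (robin_count s) / INR s) with ((INR s - INR (robin_count s)) / INR s)
    by (field; lra).
  apply Rle_div_l; [exact Hs'|].
  replace ((INR M / INR s + / INR K + INR K / c) * INR s)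
    with (INR M + INR s / INR K + INR s * INR K / c) by (field; repeat split; lra).
  exact Hcount.
Qed.

Theorem mainTheorem6 :
  is_lim_seq (fun s : nat => INR (robin_count s) / INR s) 1.
Proof.
  apply is_lim_seq_spec. intros eps. set (e := eps / 3).
  assert (He : 0 < e) by (unfold e; pose proof (cond_pos eps); lra).
  destruct (archimed_cor1 e He) as [K [HKe HK]].
  assert (Hce : 0 < e * exp euler_gamma) by (apply Rmult_lt_0_compat; [exact He | apply exp_pos]).
  destruct (exists_nat_ln_ln_gt (INR K / (e * exp euler_gamma))) as [M HM].
  assert (Hlnln : 0 < ln (ln (INR M))).
  { eapply Rle_lt_trans; [|exact HM].
    apply Rlt_le, Rdiv_lt_0_compat; [apply lt_0_INR; exact HK | exact Hce]. }
  assert (HKc : INR K / (exp euler_gamma * ln (ln (INR M))) < e).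
  { apply Rlt_div_l; [apply Rmult_lt_0_compat; [apply exp_pos | exact Hlnln]|].
    apply Rlt_div_l in HM; [|exact Hce].
    replace (e * (exp euler_gamma * ln (ln (INR M))))
      with (ln (ln (INR M)) * (e * exp euler_gamma)) by ring.
    exact HM. }
  destruct (INR_archimed e (INR M) He) as [S HS].
  exists (S + 1)%nat. intros s Hs.
  assert (Hs' : 0 < INR s) by (apply lt_0_INR; lia).
  assert (HMs : INR M / INR s < e).
  { apply Rlt_div_l; [exact Hs'|].
    assert (INR S <= INR s) by (apply le_INR; lia). nra. }
  pose proof (robin_density_defect_le K M s HK Hlnln ltac:(lia)) as Hdefect.
  assert (Hle1 : INR (robin_count s) / INR s <= 1).
  { apply Rle_div_l; [exact Hs'|]. pose proof (le_INR _ _ (robin_count_le s)). lra. }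
  apply Rabs_def1; unfold e in *; lra.
Qed.
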